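(* Let $\lambda\in(0,r^\alpha)$. For a finite set $E\subset K$ with $\#E\ge2$, if $R(\xi,\eta)>0$ for all distinct $\xi,\eta\in E$, then $R(\xi,E\setminus\{\xi\})>0$ for all $\xi\in E$.
   Context: Let $\{S_i\}_{i=1}^N$ ($N\ge2$) be contractive similitudes of $\mathbb R^d$ with ratios $r_i\in(0,1)$ satisfying the open set condition; $K$ the self-similar set, $\alpha$ its Hausdorff dimension, $r=\min r_i$. $\Sigma^*$ finite words with empty word $\vartheta$, $S_{\mathbf x}$, $r_{\mathbf x}$ compositions/products. $\mathcal J_0=\{\vartheta\}$, $\mathcal J_n=\{i_1\cdots i_k:r_{i_1\cdots i_k}\le r^n<r_{i_1\cdots i_{k-1}}\}$, $X_n=\bigcup_{k\le n}\mathcal J_k$, $|\mathbf x|=n$ on $\mathcal J_n$, parent $\mathbf x^-$ the prefix in $\mathcal J_{n-1}$. Edges: $\{\mathbf x,\mathbf x^-\}$ and horizontal $\{\mathbf x,\mathbf y\}$ ($\mathbf x\ne\mathbf y\in\mathcal J_n$, $\inf_{\xi,\eta\in K}|S_{\mathbf x}(\xi)-S_{\mathbf y}(\eta)|\le\gamma r^n$). Conductances of the $\lambda$-natural random walk: $c(\mathbf x,\mathbf x^-)=r_{\mathbf x}^\alpha\lambda^{-|\mathbf x|}$, $c(\mathbf x,\mathbf y)=r^{\alpha|\mathbf x|}\lambda^{-|\mathbf x|}$ on horizontal edges, zero otherwise; $\mathcal E_{X_n}[f]=\frac12\sum_{\mathbf x,\mathbf y\in X_n}c(\mathbf x,\mathbf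 y)(f(\mathbf x)-f(\mathbf y))^2$. Effective resistance $R_{X_n}(A,B)=(\min\{\mathcal E_{X_n}[f]:f=1$ on $A$, $0$ on $B\})^{-1}$, $0$ if $A\cap B\ne\emptyset$. For a $\kappa$-sequence (maps $\kappa_n:K\to\mathcal J_n$ with $\kappa_n(\xi)$ a prefix of $\kappa_{n+1}(\xi)$ and $\xi\in S_{\kappa_n(\xi)}(K)$ for all $n$), the limiting resistance of closed $\Phi,\Psi\subset K$ is $R(\Phi,\Psi)=\lim_nR_{X_n}(\kappa_n(\Phi),\kappa_n(\Psi))$ (exists, independent of the $\kappa$-sequence); points are identified with singletons. *)

From HB Require Import structures.
From mathcomp Require Import all_boot all_order all_algebra.
From mathcomp Require Import all_classical all_reals all_analysis.
Set Implicit Arguments. Unset Strict Implicit. Unset Printing Implicit Defensive.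
Import Order.TTheory GRing.Theory Num.Theory.
Import numFieldNormedType.Exports.
Local Open Scope classical_set_scope.
Local Open Scope ring_scope.

Definition eucl_dist (R : realType) (d : nat) (x y : 'rV[R]_d) : R :=
  Num.sqrt (\sum_(j < d) (x ord0 j - y ord0 j) ^+ 2).

(* Euclidean diameter of a set (meant for bounded sets; 0 for the empty set). *)
Definition ediam (R : realType) (d : nat) (B : set 'rV[R]_d) : R :=
  sup ([set eucl_dist x y | x in B & y in B] `|` [set 0]).

Definition hausdorff_delta (R : realType) (d : nat) (s delta : R)
    (A : set 'rV[R]_d) : \bar R :=
  ereal_inf [set (\sum_(0 <= k <oo) ((ediam (F k)) `^ s)%:E)%E
            | F in [set F : nat -> set 'rV[R]_d |
                     A `<=` \bigcup_k F k /\
                     (forall k x y, F k x -> F k y -> eucl_dist x y <= delta)]].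

Definition hausdorff_measure (R : realType) (d : nat) (s : R)
    (A : set 'rV[R]_d) : \bar R :=
  ereal_sup [set hausdorff_delta s delta A | delta in [set delta : R | 0 < delta]].

Definition hausdorff_dim (R : realType) (d : nat) (A : set 'rV[R]_d) : \bar R :=
  ereal_inf [set s%:E | s in [set s : R | 0 <= s /\ hausdorff_measure s A = 0%E]].

Definition OSC (R : realType) (d N : nat) (S : 'I_N -> 'rV[R]_d -> 'rV[R]_d) : Prop :=
  exists U : set 'rV[R]_d, open U /\ U !=set0 /\
    (forall i, S i @` U `<=` U) /\
    (forall i j, i != j -> S i @` U `&` S j @` U = set0).

Definition word (N : nat) := seq 'I_N.

Definition rw (R : realType) (N : nat) (r : 'I_N -> R) (w : word N) : R :=
  \prod_(i <- w) r i.

Definition Sw (R : realType) (d N : nat) (S : 'I_N -> 'rV[R]_d -> 'rV[R]_d)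
    (w : word N) : 'rV[R]_d -> 'rV[R]_d :=
  foldr (fun i f => S i \o f) id w.

Definition rmin (R : realType) (N : nat) (r : 'I_N -> R) : R :=
  \big[Num.min/1]_(i < N) r i.

Definition inJ (R : realType) (N : nat) (r : 'I_N -> R) (n : nat) (w : word N) : Prop :=
  if n is 0 then w = [::]
  else w <> [::] /\ rw r w <= rmin r ^+ n /\ rmin r ^+ n < rw r (take (size w).-1 w).

(* |w| : the (unique) n with w \in J_n *)
Definition level (R : realType) (N : nat) (r : 'I_N -> R) (w : word N) : nat :=
  xget 0%N [set n | inJ r n w].

Definition Xn (R : realType) (N : nat) (r : 'I_N -> R) (n : nat) : set (word N) :=
  [set w | exists2 k, (k <= n)%N & inJ r k w].

Definition is_parent (R : realType) (N : nat) (r : 'I_N -> R) (y x : word N) : Prop :=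
  exists2 n, (1 <= n)%N & [/\ inJ r n x, inJ r n.-1 y & prefix y x].

Definition gap (R : realType) (d N : nat) (S : 'I_N -> 'rV[R]_d -> 'rV[R]_d)
    (K : set 'rV[R]_d) (x y : word N) : R :=
  inf [set eucl_dist (Sw S x xi) (Sw S y eta) | xi in K & eta in K].

Definition horizontal (R : realType) (d N : nat) (S : 'I_N -> 'rV[R]_d -> 'rV[R]_d)
    (r : 'I_N -> R) (K : set 'rV[R]_d) (gamma : R) (x y : word N) : Prop :=
  exists n, [/\ inJ r n x, inJ r n y, x <> y & gap S K x y <= gamma * rmin r ^+ n].

Definition conductance (R : realType) (d N : nat) (S : 'I_N -> 'rV[R]_d -> 'rV[R]_d)
    (r : 'I_N -> R) (K : set 'rV[R]_d) (alpha gamma lambda : R) (x y : word N) : R :=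
  if `[< is_parent r y x >] then (rw r x) `^ alpha * lambda ^- (level r x)
  else if `[< is_parent r x y >] then (rw r y) `^ alpha * lambda ^- (level r y)
  else if `[< horizontal S r K gamma x y >] then
    (rmin r `^ alpha) ^+ (level r x) * lambda ^- (level r x)
  else 0.

Definition energy (R : realType) (d N : nat) (S : 'I_N -> 'rV[R]_d -> 'rV[R]_d)
    (r : 'I_N -> R) (K : set 'rV[R]_d) (alpha gamma lambda : R) (n : nat)
    (f : word N -> R) : R :=
  2^-1 * \sum_(x \in Xn r n) \sum_(y \in Xn r n)
     conductance S r K alpha gamma lambda x y * (f x - f y) ^+ 2.

Definition eff_res (R : realType) (d N : nat) (S : 'I_N -> 'rV[R]_d -> 'rV[R]_d)
    (r : 'I_N -> R) (K : set 'rV[R]_d) (alpha gamma lambda : R) (n : nat)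
    (A B : set (word N)) : R :=
  if `[< A `&` B !=set0 >] then 0
  else (inf [set energy S r K alpha gamma lambda n f
            | f in [set f : word N -> R |
                    (forall x, A x -> f x = 1) /\ (forall x, B x -> f x = 0)]])^-1.

Definition kappa_seq (R : realType) (d N : nat) (S : 'I_N -> 'rV[R]_d -> 'rV[R]_d)
    (r : 'I_N -> R) (K : set 'rV[R]_d) (kappa : nat -> 'rV[R]_d -> word N) : Prop :=
  forall xi, K xi -> forall n,
    [/\ inJ r n (kappa n xi), prefix (kappa n xi) (kappa n.+1 xi)
      & (Sw S (kappa n xi) @` K) xi].

Definition lim_res (R : realType) (d N : nat) (S : 'I_N -> 'rV[R]_d -> 'rV[R]_d)
    (r : 'I_N -> R) (K : set 'rV[R]_d) (alpha gamma lambda : R)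
    (kappa : nat -> 'rV[R]_d -> word N) (Phi Psi : set 'rV[R]_d) : R :=
  limn (fun n => eff_res S r K alpha gamma lambda n (kappa n @` Phi) (kappa n @` Psi)).

From HB Require Import structures.
From mathcomp Require Import all_boot all_order all_algebra.
From mathcomp Require Import all_classical all_reals all_analysis.
From mathcomp Require Import ring lra.
Import Order.TTheory GRing.Theory Num.Theory.
Import numFieldNormedType.Exports.
Local Open Scope classical_set_scope.
Local Open Scope ring_scope.
Set Implicit Arguments. Unset Strict Implicit.

(* Write C_n(P, Q) for the infimum of the energies of potentials equal to 1 on P and
   0 on Q (the effective conductance), so that R_{X_n}(P, Q) = 1 / C_n(P, Q), and let
   B = E \ {xi}.  Conductance is subadditive in the target set, so C_n(xi, B) is at most
   sum_b C_n(xi, b), which is eventually below sum_b 2 / R(xi, b): the resistances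
   R_{X_n}(xi, B) stay above a positive constant.  It remains to see that they converge
   (limn of a divergent sequence is 0).  Parent edges between levels n and n + 1 carry
   conductance at least r^(alpha (n+2)) / lambda^(n+1), so a near-optimal potential at
   level n + 1 varies by at most del_n = O((lambda / r^alpha)^(n/2)) along them, and
   rescaling it gives C_n (1 - 2 del_n)^2 <= C_(n+1).  Since lambda < r^alpha, the
   resistances are thus nonincreasing up to a geometrically summable error. *)

Lemma finite_words_size_le (N L : nat) :
  finite_set [set w : word N | (size w <= L)%N].
Proof.
elim: L => [|L IH].
  by apply: sub_finite_set (finite_set1 [::]) => -[].
pose cons_pair (p : 'I_N * word N) : word N := p.1 :: p.2.
apply: (@sub_finite_set _ _
  ([set [::]] `|` cons_pair @` (setT `*` [set w : word N | (size w <= L)%N]))).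
  by move=> [|i w] /= w_le; [left | right; exists (i, w)].
rewrite finite_setU; split; first exact: finite_set1.
by apply/finite_image/finite_setX => //; exact: finite_finset.
Qed.

Lemma sqr_sub_maxl_le (R : realDomainType) (c u v : R) :
  (Num.max c u - Num.max c v) ^+ 2 <= (u - v) ^+ 2.
Proof. by have := sqr_ge0 (u - v); case: (leP c u); case: (leP c v); nra. Qed.

Lemma sqr_sub_minl_le (R : realDomainType) (c u v : R) :
  (Num.min c u - Num.min c v) ^+ 2 <= (u - v) ^+ 2.
Proof. by have := sqr_ge0 (u - v); case: (leP c u); case: (leP c v); nra. Qed.

Lemma sqr_sub_min_le (R : realDomainType) (a1 a2 b1 b2 : R) :
  (Num.min a1 a2 - Num.min b1 b2) ^+ 2 <= (a1 - b1) ^+ 2 + (a2 - b2) ^+ 2.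
Proof.
have := sqr_ge0 (a1 - b1); have := sqr_ge0 (a2 - b2).
case: (leP a1 a2) => h1; case: (leP b1 b2) => h2;
  [case: (leP 0 (a1 - b1)) | case: (leP 0 (a1 - b2)) |
   case: (leP 0 (a2 - b1)) | case: (leP 0 (a2 - b2))] => h0; nra.
Qed.

Lemma ler_fsum (R : numDomainType) (T : choiceType) (A : set T) (F G : T -> R) :
  finite_set A -> (forall x, A x -> F x <= G x) ->
  \sum_(x \in A) F x <= \sum_(x \in A) G x.
Proof.
move=> finA FG; rewrite !fsbig_finite // !big_seq; apply: ler_sum => x.
by rewrite in_fset_set // inE => /FG.
Qed.

Lemma ler_fsum_nneg_subset (R : numDomainType) (T : choiceType) (A B : set T)
    (F : T -> R) :
  finite_set B -> A `<=` B -> (forall x, B x -> 0 <= F x) ->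
  \sum_(x \in A) F x <= \sum_(x \in B) F x.
Proof.
move=> finB AB F0; have finA := sub_finite_set AB finB.
rewrite -(setDUK AB) fsbigU0 //; last by move=> x [Ax []].
  by rewrite lerDl fsumr_ge0 // => x [/F0].
exact: finite_setD.
Qed.

Lemma near_all_seq (T : Type) (F : set_system T) (I : eqType) (s : seq I)
    (P : I -> T -> Prop) :
  Filter F -> (forall i, i \in s -> \forall x \near F, P i x) ->
  \forall x \near F, forall i, i \in s -> P i x.
Proof.
move=> FF; elim: s => [|i s IH] sP; first exact: nearW.
apply: filterS (filterI (sP i (mem_head _ _)) (IH _)) => [x [Pix Psx] j|j js].
  by rewrite inE => /predU1P[->|/Psx].
by apply: sP; rewrite inE js orbT.
Qed.

Lemma cvgn_limn_neq0 (R : realType) (u : R ^nat) : limn u != 0 -> cvgn u.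
Proof.
by move=> u_neq0; apply: contrapT => /dvgP u_dvg; rewrite u_dvg eqxx in u_neq0.
Qed.

Lemma near_limn_half_twice (R : realType) (u : R ^nat) : 0 < limn u ->
  \forall n \near \oo, limn u / 2 < u n < 2 * limn u.
Proof.
move=> L_gt0; have u_cvg : cvgn u by apply: cvgn_limn_neq0; rewrite gt_eqF.
have lt_half : limn u / 2 < limn u by lra.
have lt_twice : limn u < 2 * limn u by lra.
near=> n; apply/andP; split; near: n.
  exact: cvgr_gt u_cvg _ lt_half.
exact: cvgr_lt u_cvg _ lt_twice.
Unshelve. all: by end_near.
Qed.

Lemma cvgn_geometric_quasi_nonincreasing (R : realType) (u : R ^nat) (A s : R) :
  0 <= A -> 0 <= s < 1 ->
  (\forall n \near \oo, 0 <= u n /\ u n.+1 <= u n + A * s ^+ n) -> cvgn u.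
Proof.
move=> A_ge0 /andP[s_ge0 s_lt1] [N0 _ u_N0].
(* Adding the bound A s^m / (1 - s) on all later errors makes the sequence nonincreasing. *)
pose w m := A / (1 - s) * s ^+ (m + N0).
pose v m := u (m + N0)%N + w m.
have v_noninc : nonincreasing_seq v.
  apply/nonincreasing_seqP => m; rewrite /v /w addSn.
  have [_ u_le] := u_N0 (m + N0)%N (leq_addl _ _).
  have -> : A / (1 - s) * s ^+ (m + N0) =
      A * s ^+ (m + N0) + A / (1 - s) * s ^+ (m + N0).+1.
    by rewrite exprS; field; lra.
  by rewrite addrA lerD2r.
have v_lb : has_lbound (range v).
  exists 0 => _ [m _ <-]; have [u_ge0 _] := u_N0 (m + N0)%N (leq_addl _ _).
  by rewrite addr_ge0 // mulr_ge0 ?exprn_ge0 ?divr_ge0 //; lra.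
have w_cvg : w @ \oo --> 0.
  rewrite -(mulr0 (A / (1 - s))); apply: cvgMl_tmp.
  have := @cvg_expr R s; rewrite ger0_norm // => /(_ s_lt1).
  by rewrite -(cvg_shiftn N0).
apply/cvg_ex; exists (inf (range v)); rewrite -(cvg_shiftn N0).
have -> : (fun m => u (m + N0)%N) = v - w by apply: funext => m; rewrite /v /= addrK.
by rewrite -[inf _]subr0; exact: cvgB (nonincreasing_cvgn v_noninc v_lb) w_cvg.
Qed.

Lemma exprn_powR (R : realType) (a x : R) (k : nat) :
  0 <= a -> (a `^ x) ^+ k = (a ^+ k) `^ x.
Proof.
by move=> a_ge0; rewrite -powR_mulrn ?powR_ge0 // -powRrM mulrC powRrM powR_mulrn.
Qed.

Lemma hausdorff_dim_ge0 (R : realType) (d : nat) (A : set 'rV[R]_d) :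
  (0 <= hausdorff_dim A)%E.
Proof. by apply: le_ereal_inf_tmp => _ [s [s0 _] <-]; rewrite lee_fin. Qed.

Lemma inv_le_add_of_mul_sqr_le (R : realFieldType) (M M' U del : R) :
  0 < M -> 0 < M' -> M'^-1 <= U -> 0 <= del -> M * (1 - 2 * del) ^+ 2 <= M' ->
  M'^-1 <= M^-1 + 4 * U * del.
Proof.
move=> M_gt0 M'_gt0 M'U del_ge0 M_le.
have scaled : M'^-1 * (1 - 2 * del) ^+ 2 <= M^-1.
  have MM'_inv_ge0 : 0 <= (M * M')^-1 by rewrite invr_ge0 ltW // mulr_gt0.
  have := ler_wpM2l MM'_inv_ge0 M_le.
  have -> : (M * M')^-1 * (M * (1 - 2 * del) ^+ 2) = M'^-1 * (1 - 2 * del) ^+ 2.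
    by field; rewrite !gt_eqF.
  by have -> : (M * M')^-1 * M' = M^-1 by field; rewrite !gt_eqF.
have M'inv_ge0 : 0 <= M'^-1 by rewrite invr_ge0 ltW.
have := sqr_ge0 del; nra.
Qed.

Section ResistanceNetwork.
Variables (R : realType) (d N : nat) (S : 'I_N -> 'rV[R]_d -> 'rV[R]_d)
  (r : 'I_N -> R) (K : set 'rV[R]_d) (alpha gamma lambda : R).
Hypothesis r_gt0_lt1 : forall i, 0 < r i < 1.
Hypothesis lambda_gt0 : 0 < lambda.
Hypothesis alpha_ge0 : 0 <= alpha.

Local Notation cond := (conductance S r K alpha gamma lambda).
Local Notation En := (energy S r K alpha gamma lambda).

Lemma rmin_gt0 : 0 < rmin r.
Proof. by apply: lt_bigmin => // i _; case/andP: (r_gt0_lt1 i). Qed.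

Lemma rmin_le i : rmin r <= r i.
Proof. exact: bigmin_le. Qed.

Lemma rmin_le1 : rmin r <= 1.
Proof. exact: bigmin_le_id. Qed.

Lemma rw_ge0 w : 0 <= rw r w.
Proof. by apply: prodr_ge0 => i _; case/andP: (r_gt0_lt1 i) => /ltW. Qed.

Let rmax := \big[Num.max/0]_(i < N) r i.

Let norm_rmax_lt1 : `|rmax| < 1.
Proof.
rewrite ger0_norm; last exact: bigmax_ge_id.
by apply: bigmax_lt => // i _; case/andP: (r_gt0_lt1 i).
Qed.

Let rw_le_rmax w : rw r w <= rmax ^+ size w.
Proof.
elim: w => [|i w IH]; first by rewrite /rw big_nil.
rewrite /rw big_cons exprS ler_pM ?rw_ge0 //; last exact: le_bigmax.
by case/andP: (r_gt0_lt1 i) => /ltW.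
Qed.

Lemma finite_Xn n : finite_set (Xn r n).
Proof.
have [L _ rmax_L] : \forall m \near \oo, rmax ^+ m < rmin r ^+ n.
  by apply: cvgr_lt (cvg_expr norm_rmax_lt1) _ _; rewrite exprn_gt0 // rmin_gt0.
apply: sub_finite_set (finite_words_size_le N L) => w [[|k] k_le /= w_k].
  by rewrite w_k.
case: w_k => w_neq [_ w_gt]; rewrite leqNgt; apply/negP => L_lt.
have : rmin r ^+ n < rmax ^+ (size w).-1.
  apply: le_lt_trans (lt_le_trans w_gt _).
    by rewrite ler_wiXn2l // ?rmin_le1 // ltW // rmin_gt0.
  by apply: le_trans (rw_le_rmax _) _; rewrite size_takel ?leq_pred.
have L_le : (L <= (size w).-1)%N by rewrite -ltnS prednK // (leq_ltn_trans _ L_lt).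
by move/(lt_trans (rmax_L _ L_le)); rewrite ltxx.
Qed.

Lemma Xn_subset_succ n : Xn r n `<=` Xn r n.+1.
Proof. by move=> w [k k_le w_k]; exists k => //; exact: leqW. Qed.

Lemma conductance_ge0 x y : 0 <= cond x y.
Proof.
have lambda_pow k : 0 <= lambda ^- k by rewrite invr_ge0 exprn_ge0 // ltW.
rewrite /conductance; case: ifP => _; first by rewrite mulr_ge0 ?powR_ge0.
case: ifP => _; first by rewrite mulr_ge0 ?powR_ge0.
by case: ifP => _ //; rewrite mulr_ge0 ?exprn_ge0 ?powR_ge0.
Qed.

Let term_ge0 (f : word N -> R) x y : 0 <= cond x y * (f x - f y) ^+ 2.
Proof. by rewrite mulr_ge0 ?sqr_ge0 ?conductance_ge0. Qed.

Lemma energy_ge0 n f : 0 <= En n f.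
Proof. by rewrite mulr_ge0 // fsumr_ge0 // => x _; rewrite fsumr_ge0. Qed.

Lemma energy_cst n c : En n (fun=> c) = 0.
Proof.
rewrite /energy fsbig1 ?mulr0 // => x _.
by rewrite fsbig1 // => y _; rewrite subrr expr2 !mulr0.
Qed.

Lemma energy_le_add n g f1 f2 :
  (forall x y, (g x - g y) ^+ 2 <= (f1 x - f1 y) ^+ 2 + (f2 x - f2 y) ^+ 2) ->
  En n g <= En n f1 + En n f2.
Proof.
move=> g_le; rewrite /energy -mulrDr ler_wpM2l //.
rewrite -fsbig_split; last exact: finite_Xn.
apply: ler_fsum (finite_Xn n) _ => x _; rewrite -fsbig_split; last exact: finite_Xn.
apply: ler_fsum (finite_Xn n) _ => y _ /=.
by rewrite -mulrDr ler_wpM2l ?conductance_ge0.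
Qed.

Lemma energy_le_scale n g f k : 0 <= k ->
  (forall x y, (g x - g y) ^+ 2 <= k * (f x - f y) ^+ 2) -> En n g <= k * En n f.
Proof.
move=> k_ge0 g_le; rewrite /energy mulrCA ler_wpM2l // mulr_fsumr.
apply: ler_fsum (finite_Xn n) _ => x _; rewrite mulr_fsumr.
apply: ler_fsum (finite_Xn n) _ => y _.
by rewrite [k * _]mulrCA ler_wpM2l ?conductance_ge0.
Qed.

Lemma energy_le_succ n f : En n f <= En n.+1 f.
Proof.
rewrite /energy ler_wpM2l //.
apply: (@le_trans _ _
  (\sum_(x \in Xn r n) \sum_(y \in Xn r n.+1) cond x y * (f x - f y) ^+ 2)).
  apply: ler_fsum (finite_Xn n) _ => x _.
  by apply: ler_fsum_nneg_subset; [exact: finite_Xn | exact: Xn_subset_succ |].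
apply: ler_fsum_nneg_subset; [exact: finite_Xn | exact: Xn_subset_succ |].
by move=> x _; rewrite fsumr_ge0.
Qed.

Lemma conductance_sqr_le_energy n f x y : Xn r n x -> Xn r n y ->
  cond x y * (f x - f y) ^+ 2 <= 2 * En n f.
Proof.
move=> Xx Xy; rewrite /energy [2 * _]mulrA divff ?mul1r //.
have sub1 z : Xn r n z -> [set z] `<=` Xn r n by move=> Xz w ->.
apply: le_trans (ler_fsum_nneg_subset (finite_Xn n) (sub1 _ Xx) _); last first.
  by move=> z _; rewrite fsumr_ge0.
rewrite fsbig_set1.
apply: le_trans (ler_fsum_nneg_subset (finite_Xn n) (sub1 _ Xy) _) => //.
by rewrite fsbig_set1.
Qed.

Lemma rw_take_ge w : w <> [::] -> rmin r * rw r (take (size w).-1 w) <= rw r w.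
Proof.
case/lastP: w => [//|w i] _.
rewrite size_rcons /= -cats1 take_size_cat // /rw big_cat big_seq1 /= mulrC.
by rewrite ler_wpM2l ?rw_ge0 ?rmin_le.
Qed.

Lemma inJ_rw_gt n w : inJ r n.+1 w -> rmin r ^+ n.+2 < rw r w.
Proof.
move=> [w_neq [_ w_gt]]; apply: lt_le_trans (rw_take_ge w_neq).
by rewrite exprS ltr_pM2l // rmin_gt0.
Qed.

Lemma inJ_uniq m k w : inJ r m w -> inJ r k w -> m = k.
Proof.
wlog mk : m k / (m < k)%N => [wlog_lt|].
  by case: (ltngtP m k) => // [mk|km] wm wk; [exact: wlog_lt | apply/esym/wlog_lt].
case: k mk => // k; case: m => [_ -> []//|m mk wm [_ [wk _]]].
have : rmin r ^+ k.+1 <= rmin r ^+ m.+2.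
  by rewrite ler_wiXn2l ?rmin_le1 // ltW // rmin_gt0.
by move/(le_trans wk)/(lt_le_trans (inJ_rw_gt wm)); rewrite ltxx.
Qed.

Lemma levelE n w : inJ r n w -> level r w = n.
Proof.
move=> wn; apply: (@inJ_uniq _ _ w) => //.
by apply: (xgetPex 0%N (P := [set m | inJ r m w])); exists n.
Qed.

Lemma conductance_parent_ge n x' x : inJ r n.+1 x' -> inJ r n x -> prefix x x' ->
  (rmin r `^ alpha) ^+ n.+2 / lambda ^+ n.+1 <= cond x' x.
Proof.
move=> x'n1 xn x_x'; have x_parent : is_parent r x x' by exists n.+1.
have rmin_ge0 := ltW rmin_gt0; have lambda_ge0 := ltW lambda_gt0.
rewrite /conductance asboolT // (levelE x'n1) exprn_powR //.
rewrite ler_wpM2r ?invr_ge0 ?exprn_ge0 // ge0_ler_powR ?nnegrE ?rw_ge0 ?exprn_ge0 //.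
exact: ltW (inJ_rw_gt x'n1).
Qed.

Definition admissible (P Q : set (word N)) : set (word N -> R) :=
  [set f | (forall x, P x -> f x = 1) /\ (forall x, Q x -> f x = 0)].

Definition eff_cond n (P Q : set (word N)) : R :=
  inf [set En n f | f in admissible P Q].

Lemma eff_resE n P Q : ~ (P `&` Q !=set0) ->
  eff_res S r K alpha gamma lambda n P Q = (eff_cond n P Q)^-1.
Proof. by move=> PQ; rewrite /eff_res asboolF. Qed.

Lemma eff_res_gt0 n P Q : 0 < eff_res S r K alpha gamma lambda n P Q ->
  ~ (P `&` Q !=set0) /\ eff_cond n P Q = (eff_res S r K alpha gamma lambda n P Q)^-1.
Proof.
have [PQ|PQ] := pselect (P `&` Q !=set0).
  by rewrite /eff_res asboolT // ltxx.
by rewrite eff_resE // invrK.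
Qed.

Let has_inf_energy n P Q : ~ (P `&` Q !=set0) ->
  has_inf [set En n f | f in admissible P Q].
Proof.
move=> PQ; split; last by exists 0 => _ [f _ <-]; exact: energy_ge0.
pose indicator x : R := if `[< P x >] then 1 else 0.
exists (En n indicator), indicator => //.
split=> x x_in; first by rewrite /indicator asboolT.
by rewrite /indicator asboolF // => Px; apply: PQ; exists x.
Qed.

Lemma eff_cond_le_energy n P Q f : admissible P Q f -> eff_cond n P Q <= En n f.
Proof.
by move=> f_adm; apply: ge_inf; [exists 0 => _ [g _ <-]; exact: energy_ge0 | exists f].
Qed.

Lemma eff_cond_adherent n P Q e : ~ (P `&` Q !=set0) -> 0 < e ->
  exists2 f, admissible P Q f & En n f < eff_cond n P Q + e.
Proof.
move=> PQ e_gt0.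
by have [_ [f f_adm <-]] := inf_adherent e_gt0 (has_inf_energy n PQ); exists f.
Qed.

Lemma le_eff_cond n P Q P' Q' : P `<=` P' -> Q `<=` Q' -> ~ (P' `&` Q' !=set0) ->
  eff_cond n P Q <= eff_cond n P' Q'.
Proof.
move=> PP' QQ' P'Q'; apply: lb_le_inf; first by case: (has_inf_energy n P'Q').
move=> _ [g [g1 g0] <-]; apply: eff_cond_le_energy.
by split=> x ?; [apply: g1; exact: PP' | apply: g0; exact: QQ'].
Qed.

(* The pointwise minimum of two potentials, clamped at 0, is admissible for the union. *)
Lemma eff_cond_setU n P Q1 Q2 : ~ (P `&` Q1 !=set0) -> ~ (P `&` Q2 !=set0) ->
  eff_cond n P (Q1 `|` Q2) <= eff_cond n P Q1 + eff_cond n P Q2.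
Proof.
move=> PQ1 PQ2; apply/ler_addgt0Pr => e e_gt0.
have e2_gt0 : 0 < e / 2 by rewrite divr_gt0.
have [f1 [f1_1 f1_0] f1_le] := eff_cond_adherent n PQ1 e2_gt0.
have [f2 [f2_1 f2_0] f2_le] := eff_cond_adherent n PQ2 e2_gt0.
pose g x := Num.max 0 (Num.min (f1 x) (f2 x)).
have g_adm : admissible P (Q1 `|` Q2) g.
  split=> x x_in; rewrite /g.
    by rewrite f1_1 // f2_1 // minxx; apply/max_idPr.
  apply/max_idPl; rewrite ge_min.
  by case: x_in => x_in; rewrite ?(f1_0 x x_in) ?(f2_0 x x_in) lexx ?orbT.
apply: le_trans (eff_cond_le_energy n g_adm) _.
apply: le_trans (@energy_le_add n g f1 f2 _) _.
  by move=> x y; apply: le_trans (sqr_sub_maxl_le _ _ _) (sqr_sub_min_le _ _ _ _).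
have -> : eff_cond n P Q1 + eff_cond n P Q2 + e =
    (eff_cond n P Q1 + e / 2) + (eff_cond n P Q2 + e / 2) by field.
by rewrite lerD // ltW.
Qed.

Lemma eff_cond_bigcup n P (T : eqType) (s : seq T) (Q : T -> set (word N)) :
  (forall b, b \in s -> ~ (P `&` Q b !=set0)) ->
  eff_cond n P (\bigcup_(b in [set` s]) Q b) <= \sum_(b <- s) eff_cond n P (Q b).
Proof.
elim: s => [|b s IH] PQ.
  rewrite big_nil; have one_adm : admissible P (\bigcup_(b in [set` [::]]) Q b) (fun=> 1).
    by split=> // x [].
  by rewrite -(energy_cst n 1) eff_cond_le_energy.
rewrite big_cons.
have -> : \bigcup_(c in [set` b :: s]) Q c = Q b `|` \bigcup_(c in [set` s]) Q c.
  apply/seteqP; split=> x.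
    by move=> [c]; rewrite /= inE => /predU1P[-> | c_s] Qcx; [left | right; exists c].
  case=> [Qbx | [c c_s Qcx]]; first by exists b; rewrite /= ?mem_head.
  by exists c; rewrite /= ?inE ?c_s ?orbT.
apply: le_trans (eff_cond_setU _ _ _) _.
- by apply: PQ; rewrite mem_head.
- by move=> [x [Px [c c_s Qcx]]]; apply: (PQ c); [rewrite inE c_s orbT | exists x].
by rewrite lerD2l IH // => c c_s; apply: PQ; rewrite inE c_s orbT.
Qed.

Lemma sqr_sub_le_of_conductance_ge n f x y c0 E0 del :
  Xn r n x -> Xn r n y -> c0 <= cond x y -> En n f <= E0 ->
  2 * E0 <= c0 * del ^+ 2 -> 0 < c0 -> (f x - f y) ^+ 2 <= del ^+ 2.
Proof.
move=> Xx Xy c0_le En_le E0_le c0_gt0; rewrite -(ler_pM2l c0_gt0).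
apply: le_trans (ler_wpM2r (sqr_ge0 _) c0_le) _.
apply: le_trans (conductance_sqr_le_energy f Xx Xy) _.
by apply: le_trans E0_le; rewrite ler_wpM2l.
Qed.

(* Rescale f affinely so that 1 - del goes to 1 and del to 0, then truncate to [0, 1]. *)
Lemma eff_cond_mul_le_energy n (A B : set (word N)) f del :
  2 * del < 1 -> (forall a, A a -> 1 - del <= f a) -> (forall b, B b -> f b <= del) ->
  eff_cond n A B * (1 - 2 * del) ^+ 2 <= En n f.
Proof.
move=> del_lt fA fB; have gap_gt0 : 0 < 1 - 2 * del by lra.
pose g x := Num.min 1 (Num.max 0 ((f x - del) / (1 - 2 * del))).
have g_adm : admissible A B g.
  split=> x x_in; rewrite /g.
    apply/min_idPl; rewrite le_max ler_pdivlMr // mul1r.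
    by apply/orP; right; have := fA x x_in; lra.
  have -> : Num.max 0 ((f x - del) / (1 - 2 * del)) = 0.
    by apply/max_idPl; rewrite ler_pdivrMr // mul0r; have := fB x x_in; lra.
  exact/min_idPr.
rewrite -ler_pdivlMr ?exprn_gt0 // mulrC.
apply: le_trans (eff_cond_le_energy n g_adm) _.
apply: energy_le_scale; first by rewrite invr_ge0 sqr_ge0.
move=> x y; apply: le_trans (sqr_sub_minl_le _ _ _) _.
apply: le_trans (sqr_sub_maxl_le _ _ _) _.
rewrite -mulrBl exprMn exprVn mulrC le_eqVlt; apply/orP; left; apply/eqP.
by congr (_ * _ ^+ 2); ring.
Qed.

Lemma eff_cond_mul_le_energy_succ n (A B A' B' : set (word N)) c0 E0 del f :
  0 < c0 -> 0 <= del -> 2 * del < 1 -> 2 * E0 <= c0 * del ^+ 2 ->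
  (forall a, A a -> exists2 a', A' a' &
     [/\ Xn r n.+1 a', Xn r n.+1 a & c0 <= cond a' a]) ->
  (forall b, B b -> exists2 b', B' b' &
     [/\ Xn r n.+1 b', Xn r n.+1 b & c0 <= cond b' b]) ->
  admissible A' B' f -> En n.+1 f <= E0 ->
  eff_cond n A B * (1 - 2 * del) ^+ 2 <= En n.+1 f.
Proof.
move=> c0_gt0 del_ge0 del_lt E0_le A_edge B_edge [f1 f0] En_le.
apply: le_trans (energy_le_succ n f).
apply: eff_cond_mul_le_energy => // [a /A_edge[a' A'a'] | b /B_edge[b' B'b']] [X' X c0_le];
  have := sqr_sub_le_of_conductance_ge X' X c0_le En_le E0_le c0_gt0.
  by rewrite f1 //; nra.
by rewrite f0 //; nra.
Qed.

Section KappaSequence.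
Variable kappa : nat -> 'rV[R]_d -> word N.
Hypothesis kappaP : kappa_seq S r K kappa.

Local Notation rho := (rmin r `^ alpha).
Local Notation M n Phi Psi := (eff_cond n (kappa n @` Phi) (kappa n @` Psi)).
Local Notation res n Phi Psi :=
  (eff_res S r K alpha gamma lambda n (kappa n @` Phi) (kappa n @` Psi)).

Lemma kappa_edge n x : K x ->
  [/\ Xn r n.+1 (kappa n.+1 x), Xn r n.+1 (kappa n x)
    & rho ^+ n.+2 / lambda ^+ n.+1 <= cond (kappa n.+1 x) (kappa n x)].
Proof.
move=> Kx; have [kn k_prefix _] := kappaP Kx n; have [kn1 _ _] := kappaP Kx n.+1.
by split; [exists n.+1 | exists n; rewrite ?leqW | exact: conductance_parent_ge].
Qed.

Lemma eff_cond_kappa_quasi_monotone n (Phi Psi : set 'rV[R]_d) C del :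
  Phi `<=` K -> Psi `<=` K -> 0 < C ->
  ~ (kappa n.+1 @` Phi `&` kappa n.+1 @` Psi !=set0) -> M n.+1 Phi Psi <= C ->
  0 <= del -> 2 * del < 1 -> 4 * C <= rho ^+ n.+2 / lambda ^+ n.+1 * del ^+ 2 ->
  M n Phi Psi * (1 - 2 * del) ^+ 2 <= M n.+1 Phi Psi.
Proof.
move=> PhiK PsiK C_gt0 disj M_le del_ge0 del_lt C_le.
apply/ler_addgt0Pr => e e_gt0.
have e'_gt0 : 0 < Num.min e C by rewrite lt_min e_gt0 C_gt0.
have [f f_adm f_lt] := eff_cond_adherent n.+1 disj e'_gt0.
have [min_le_e min_le_C] : Num.min e C <= e /\ Num.min e C <= C.
  by rewrite !ge_min !lexx orbT.
apply: le_trans (_ : En n.+1 f <= _).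
  2: by apply: ltW (lt_le_trans f_lt _); rewrite lerD2l.
apply: (eff_cond_mul_le_energy_succ (c0 := rho ^+ n.+2 / lambda ^+ n.+1) (E0 := 2 * C)
  (A' := kappa n.+1 @` Phi) (B' := kappa n.+1 @` Psi)) => //.
- by rewrite divr_gt0 // exprn_gt0 // ?powR_gt0 // rmin_gt0.
- by move: C_le; lra.
- move=> _ [x Phix <-]; exists (kappa n.+1 x); first by exists x.
  exact: kappa_edge (PhiK _ Phix).
- move=> _ [x Psix <-]; exists (kappa n.+1 x); first by exists x.
  exact: kappa_edge (PsiK _ Psix).
- by apply: ltW (lt_le_trans f_lt _); lra.
Qed.

Lemma cvgn_eff_res_kappa (Phi Psi : set 'rV[R]_d) c C :
  lambda < rho -> Phi `<=` K -> Psi `<=` K -> 0 < c ->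
  (\forall n \near \oo,
     ~ (kappa n @` Phi `&` kappa n @` Psi !=set0) /\ c <= M n Phi Psi <= C) ->
  cvgn (fun n => res n Phi Psi).
Proof.
move=> lambda_lt PhiK PsiK c_gt0 [N0 _ bounds].
have [_ /andP[cM MC]] := bounds N0 (leqnn _).
have C_gt0 : 0 < C := lt_le_trans c_gt0 (le_trans cM MC).
have rho_gt0 : 0 < rho by rewrite powR_gt0 // rmin_gt0.
(* del n bounds the oscillation of a near-optimal potential along parent edges. *)
pose s := Num.sqrt (lambda / rho); pose D := Num.sqrt (4 * C / rho).
pose del n := D * s * s ^+ n.
have s_ge0 : 0 <= s by exact: sqrtr_ge0.
have s_lt1 : s < 1 by rewrite -sqrtr1 ltr_sqrt // ltr_pdivrMr // mul1r.
have del_ge0 n : 0 <= del n by rewrite !mulr_ge0 ?sqrtr_ge0 ?exprn_ge0.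
have del_sqr n : rho ^+ n.+2 / lambda ^+ n.+1 * del n ^+ 2 = 4 * C.
  have D_sqr : D ^+ 2 = 4 * C / rho by rewrite sqr_sqrtr // divr_ge0 // ltW // mulr_gt0.
  have s_sqr : s ^+ 2 = lambda / rho by rewrite sqr_sqrtr // divr_ge0 // ltW.
  rewrite !exprMn D_sqr exprAC s_sqr expr_div_n !exprS.
  by field; rewrite ?expf_neq0 ?gt_eqF.
have [N1 _ del_lt] : \forall n \near \oo, 2 * del n < 1.
  have twice_del_cvg : (fun n => 2 * D * s * s ^+ n) @ \oo --> 2 * D * s * 0.
    by apply: cvgMl_tmp; apply: cvg_expr; rewrite ger0_norm.
  have lim_lt1 : 2 * D * s * 0 < 1 by rewrite mulr0.
  by apply: filterS (cvgr_lt _ twice_del_cvg _ lim_lt1) => n; rewrite /del !mulrA.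
apply: (@cvgn_geometric_quasi_nonincreasing _ _ (4 * c^-1 * (D * s)) s).
- by rewrite !mulr_ge0 ?invr_ge0 ?sqrtr_ge0 // ltW.
- by rewrite s_ge0 s_lt1.
exists (maxn N0 N1) => // n /=; rewrite geq_max => /andP[n_N0 n_N1].
have [disj /andP[cM_n _]] := bounds n n_N0.
have [disj1 /andP[cM1 M1C]] := bounds n.+1 (leqW n_N0).
have M_gt0 := lt_le_trans c_gt0 cM_n; have M1_gt0 := lt_le_trans c_gt0 cM1.
rewrite !eff_resE //; split; first by rewrite invr_ge0 ltW.
have C_le : 4 * C <= rho ^+ n.+2 / lambda ^+ n.+1 * del n ^+ 2 by rewrite del_sqr.
have quasi_mono := eff_cond_kappa_quasi_monotone PhiK PsiK C_gt0 disj1 M1C (del_ge0 n)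
  (del_lt n n_N1) C_le.
have M1_inv_le : (M n.+1 Phi Psi)^-1 <= c^-1 by rewrite lef_pV2 ?posrE.
have := inv_le_add_of_mul_sqr_le M_gt0 M1_gt0 M1_inv_le (del_ge0 n) quasi_mono.
by rewrite /del !mulrA.
Qed.

Lemma lim_res_ge_of_eff_cond_bounded (Phi Psi : set 'rV[R]_d) c C :
  lambda < rho -> Phi `<=` K -> Psi `<=` K -> 0 < c ->
  (\forall n \near \oo,
     ~ (kappa n @` Phi `&` kappa n @` Psi !=set0) /\ c <= M n Phi Psi <= C) ->
  0 < C^-1 <= lim_res S r K alpha gamma lambda kappa Phi Psi.
Proof.
move=> lambda_lt PhiK PsiK c_gt0 bounds; apply/andP; split.
  by have [N0 _ /(_ N0 (leqnn _))[_ /andP[cM MC]]] := bounds;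
    rewrite invr_gt0 (lt_le_trans c_gt0) // (le_trans cM).
apply: limr_ge; first exact: cvgn_eff_res_kappa bounds.
apply: filterS bounds => n [disj /andP[cM MC]].
by rewrite eff_resE // lef_pV2 ?posrE // (lt_le_trans c_gt0) // (le_trans cM).
Qed.

Lemma lim_res_point_gt0 xi (B : set 'rV[R]_d) :
  lambda < rho -> K xi -> B `<=` K -> finite_set B -> B !=set0 ->
  (forall b, B b -> 0 < lim_res S r K alpha gamma lambda kappa [set xi] [set b]) ->
  0 < lim_res S r K alpha gamma lambda kappa [set xi] B.
Proof.
move=> lambda_lt Kxi BK /finite_seqP[s B_s] [b0 Bb0] pos; subst B.
pose L b := lim_res S r K alpha gamma lambda kappa [set xi] [set b].
have near_L : \forall n \near \oo, forall b, b \in s ->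
    L b / 2 < res n [set xi] [set b] < 2 * L b.
  by apply: near_all_seq => b b_s; apply: near_limn_half_twice; exact: pos.
have xi_K : [set xi] `<=` K by move=> x ->.
suff /andP[C_gt0 C_le] : 0 < (\sum_(b <- s) 2 / L b)^-1 <=
    lim_res S r K alpha gamma lambda kappa [set xi] [set` s].
  exact: lt_le_trans C_le.
apply: (lim_res_ge_of_eff_cond_bounded (c := (2 * L b0)^-1)) => //.
  by rewrite invr_gt0 mulr_gt0 // pos.
apply: filterS near_L => n Ln.
have pair b : b \in s -> ~ (kappa n @` [set xi] `&` kappa n @` [set b] !=set0) /\
    M n [set xi] [set b] = (res n [set xi] [set b])^-1.
  move=> b_s; apply: eff_res_gt0; have /andP[+ _] := Ln b b_s; apply: lt_trans.
  by rewrite divr_gt0 // pos.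
have -> : kappa n @` [set` s] = \bigcup_(b in [set` s]) kappa n @` [set b].
  by rewrite -bigcup_imset1; apply: eq_bigcupr => b _; rewrite image_set1.
have disj : ~ (kappa n @` [set xi] `&` \bigcup_(b in [set` s]) kappa n @` [set b] !=set0).
  by move=> [w [xi_w [b b_s b_w]]]; apply: (pair b b_s).1; exists w.
split=> //; apply/andP; split.
  have /andP[half_lt res_lt] := Ln b0 Bb0.
  have res_gt0 : 0 < res n [set xi] [set b0].
    by apply: lt_trans half_lt; rewrite divr_gt0 ?pos.
  have xi_sub := @subset_refl _ (kappa n @` [set xi]).
  apply: le_trans (le_eff_cond n xi_sub (bigcup_sup Bb0) disj).
  by rewrite (pair b0 Bb0).2 lef_pV2 ?posrE ?mulr_gt0 ?pos // ltW.
apply: le_trans (eff_cond_bigcup n (fun b b_s => (pair b b_s).1)) _.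
rewrite !big_seq; apply: ler_sum => b b_s; rewrite (pair b b_s).2.
have /andP[L_lt _] := Ln b b_s.
have L_gt0 : 0 < L b / 2 by rewrite divr_gt0 ?pos.
have res_gt0 : 0 < res n [set xi] [set b] := lt_trans L_gt0 L_lt.
by rewrite -invf_div lef_pV2 ?posrE //; exact: ltW.
Qed.

End KappaSequence.
End ResistanceNetwork.

Theorem lemma4p8 (R : realType) (d N : nat)
    (S : 'I_N -> 'rV[R]_d -> 'rV[R]_d) (r : 'I_N -> R) (K : set 'rV[R]_d)
    (alpha gamma lambda : R) (kappa : nat -> 'rV[R]_d -> word N)
    (E : set 'rV[R]_d) :
  (2 <= N)%N ->
  (forall i, 0 < r i < 1) ->
  (forall i x y, eucl_dist (S i x) (S i y) = r i * eucl_dist x y) ->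
  OSC S ->
  compact K -> K !=set0 -> K = \bigcup_(i in setT) (S i @` K) ->
  hausdorff_dim K = alpha%:E ->
  0 < gamma ->
  0 < lambda < rmin r `^ alpha ->
  kappa_seq S r K kappa ->
  finite_set E -> E `<=` K ->
  (exists xi eta, [/\ E xi, E eta & xi <> eta]) ->
  (forall xi eta, E xi -> E eta -> xi <> eta ->
     0 < lim_res S r K alpha gamma lambda kappa [set xi] [set eta]) ->
  forall xi, E xi ->
     0 < lim_res S r K alpha gamma lambda kappa [set xi] (E `\ xi).
Proof.
move=> _ r_gt0_lt1 _ _ _ _ _ dimK _ /andP[lambda_gt0 lambda_lt] kappaP finE EK
  [xi0 [eta0 [Exi0 Eeta0 xi0_neq]]] E_pos xi Exi.
have alpha_ge0 : 0 <= alpha by rewrite -lee_fin -dimK hausdorff_dim_ge0.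
apply: (lim_res_point_gt0 r_gt0_lt1 lambda_gt0 alpha_ge0 kappaP) => //.
- exact: EK.
- by move=> x [/EK].
- exact: finite_setD.
- have [xi0_xi|] := pselect (xi0 = xi); last by exists xi0.
  by exists eta0; split=> // eta0_xi; apply: xi0_neq; rewrite xi0_xi eta0_xi.
- by move=> b [Eb b_neq]; apply: E_pos => // xi_b; apply: b_neq; rewrite xi_b.
Qed.
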